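(* Let $1\le a<b$ and $m\ge1$ be integers, let $t_a,\dots,t_{b-1}$ be indeterminates, and let $x^{(k)}_1,\dots,x^{(k)}_m$ ($a\le k\le b$) be variables. Let $S^{(k)}_m$ denote the symmetric group permuting $x^{(k)}_1,\dots,x^{(k)}_m$. Then $$\sum_{w\in S^{(a)}_m\times\cdots\times S^{(b-1)}_m}w\left(\prod_{a\le k<b}\prod_{2\le j\le m}\frac{x^{(k)}_1-t_kx^{(k+1)}_j}{x^{(k)}_1-x^{(k)}_j}\right)=\bigl((m-1)!\bigr)^{b-a}.$$
   Context: The group $S^{(a)}_m\times\cdots\times S^{(b-1)}_m$ acts on rational functions by permuting the variables $x^{(k)}_i$ within each family $k\in\{a,\dots,b-1\}$ and fixing the variables $x^{(b)}_j$ and the $t_k$. *)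

From HB Require Import structures.
From mathcomp Require Import all_boot all_order all_algebra all_fingroup.
Set Implicit Arguments. Unset Strict Implicit. Unset Printing Implicit Defensive.
Import GRing.Theory.
Local Open Scope ring_scope.

(* Variables x^(k)_i are encoded as [x k i] with k : nat (absolute family
   index) and i : 'I_m (0-based, so x^(k)_1 is index 0).  An element
   w of S^(a)_m x ... x S^(b-1)_m is a finite function
   w : {ffun 'I_(b-a) -> 'S_m}, component w l acting on family a+l.
   [wvar] gives the image of the variable x^(k)_i under w
   (families outside [a,b) are fixed). *)
Definition wvar (F : Type) (a b m : nat) (x : nat -> 'I_m -> F)
  (w : {ffun 'I_(b - a) -> 'S_m}) (k : nat) (i : 'I_m) : F :=
  match insub (k - a)%N with
  | Some l => if (a <= k)%N then x k (w l i) else x k i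
  | None => x k i
  end.

Definition wterm (F : fieldType) (a b m : nat) (hm : (0 < m)%N)
  (x : nat -> 'I_m -> F) (t : nat -> F) (w : {ffun 'I_(b - a) -> 'S_m}) : F :=
  let i1 := Ordinal hm in
  \prod_(l < b - a) \prod_(j : 'I_m | j != i1)
     ((wvar x w (a + l) i1 - t (a + l)%N * wvar x w (a + l).+1 j)
      / (wvar x w (a + l) i1 - wvar x w (a + l) j)).

From HB Require Import structures.
From mathcomp Require Import all_boot all_order all_algebra all_fingroup.
Set Implicit Arguments. Unset Strict Implicit. Unset Printing Implicit Defensive.
Import GRing.Theory.
Local Open Scope ring_scope.

(* The summand is a product over the levels k of factors depending only on
   the k-th and (k+1)-th permutations.  Summed over the permutation s of the
   lowest level, its factor is P(x_(s 1)) / prod_(j <> s 1) (x_(s 1) - x_j)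
   with P(z) = prod_(j >= 2) (z - t x'_j) monic of degree m-1.  Each value of
   s 1 is taken by (m-1)! permutations, and by Lagrange interpolation
   sum_i P(x_i) / prod_(k <> i) (x_i - x_k) is the coefficient of z^(m-1) in
   P, namely 1.  So the lowest sum is (m-1)! whatever the other permutations
   are, and induction on the number of levels concludes. *)

Lemma size_prod_XsubC_neq (R : idomainType) m (i : 'I_m) (c : 'I_m -> R) :
  size (\prod_(k | k != i) ('X - (c k)%:P)) = m.
Proof.
rewrite -big_filter size_prod_XsubC size_filter -sum1_count sum1_card.
by rewrite cardC1 card_ord; case: m i {c} => [[]|].
Qed.

Lemma lagrange_sum_coef (F : fieldType) m (x : 'I_m -> F) (P : {poly F}) :
  injective x -> (size P <= m)%N ->
  \sum_(i < m) P.[x i] / \prod_(k | k != i) (x i - x k) = P`_m.-1.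
Proof.
move=> x_inj sP.
pose D i := \prod_(k | k != i) (x i - x k).
pose L i := \prod_(k | k != i) ('X - (x k)%:P).
pose Q := \sum_(i < m) (P.[x i] / D i) *: L i.
have L_x i j : (L i).[x j] = if j == i then D i else 0.
  rewrite /L horner_prod; have [->|ji] := eqVneq j i.
    by apply: eq_bigr => k _; rewrite !hornerE.
  by rewrite (bigD1 j) //= !hornerE subrr mul0r.
have D_neq0 i : D i != 0.
  apply/prodf_neq0 => k ki.
  by rewrite subr_eq0; apply: contra ki => /eqP/x_inj ->.
have Q_eq : Q = P.
  apply/eqP; rewrite -subr_eq0; apply/eqP.
  apply: (@roots_geq_poly_eq0 _ _ [seq x i | i <- enum 'I_m]).
  - apply/allP => _ /mapP [j _ ->].
    rewrite /root hornerD hornerN /Q horner_sum (bigD1 j) //= big1.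
      by rewrite hornerZ L_x eqxx divfK // addr0 subrr.
    by move=> i ji; rewrite hornerZ L_x eq_sym (negbTE ji) mulr0.
  - by rewrite map_inj_uniq ?enum_uniq.
  - rewrite size_map size_enum_ord (leq_trans (size_polyD _ _)) //.
    rewrite size_polyN geq_max sP andbT (leq_trans (size_sum _ _ _)) //.
    apply/bigmax_leqP => i _; rewrite (leq_trans (size_scale_leq _ _)) //.
    by rewrite size_prod_XsubC_neq.
rewrite -[in RHS]Q_eq /Q coef_sum; apply: eq_bigr => i _.
have := lead_coef_prod_XsubC (index_enum 'I_m) (fun k => k != i) x.
by rewrite coefZ lead_coefE size_prod_XsubC_neq => ->; rewrite mulr1.
Qed.

Lemma card_perm_map (T : finType) (x y : T) :
  #|[set s : {perm T} | s x == y]| = (#|T|.-1)`!.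
Proof.
have card_stab : #|[set s : {perm T} | s x == x]| = (#|T|.-1)`!.
  rewrite -(cardsC1 x) -card_perm; apply: eq_card => s.
  rewrite inE; apply/eqP/idP => [sx|s_on].
    apply/subsetP => z; rewrite !inE; apply: contra => /eqP ->.
    by rewrite sx.
  by apply: (out_perm s_on); rewrite !inE eqxx.
rewrite -card_stab -(card_imset [set s : {perm T} | s x == x] (mulIg (tperm x y))).
apply: eq_card => s; apply/idP/imsetP => [|[s0]].
  rewrite inE => /eqP sx; exists (s * tperm x y)%g.
    by rewrite inE permM sx tpermR.
  by rewrite -mulgA tperm2 mulg1.
by rewrite inE => /eqP s0x ->; rewrite inE permM s0x tpermL.
Qed.

Lemma sum_perm_at (R : nmodType) (T : finType) (x : T) (f : T -> R) :
  \sum_(s : {perm T}) f (s x) = (\sum_(y : T) f y) *+ (#|T|.-1)`!.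
Proof.
rewrite (partition_big (fun s : {perm T} => s x) predT) //= -sumrMnl.
apply: eq_bigr => y _; rewrite (eq_bigr (fun _ => f y)); last by move=> s /eqP ->.
by rewrite sumr_const -(card_perm_map x y); congr (_ *+ _); apply: eq_card => s; rewrite inE.
Qed.

Section LevelFactor.
Variables (F : fieldType) (m : nat) (i0 : 'I_m).

Definition level_factor (X : nat -> 'I_m -> F) (T : nat -> F) (l : nat) (s u : 'S_m) : F :=
  \prod_(j | j != i0)
     ((X l (s i0) - T l * X l.+1 (u j)) / (X l (s i0) - X l (s j))).

Lemma sum_level_factor (X : nat -> 'I_m -> F) (T : nat -> F) l (u : 'S_m) :
  injective (X l) -> \sum_(s : 'S_m) level_factor X T l s u = ((m.-1)`!)%:R.
Proof.
move=> X_inj.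
pose P := \prod_(j | j != i0) ('X - (T l * X l.+1 (u j))%:P).
have factorE s : level_factor X T l s u
    = P.[X l (s i0)] / \prod_(k | k != s i0) (X l (s i0) - X l k).
  rewrite /level_factor big_split /= prodfV horner_prod.
  congr (_ * _^-1); first by apply: eq_bigr => j _; rewrite !hornerE.
  rewrite [RHS](reindex_inj (@perm_inj _ s)) /=.
  by apply: eq_bigl => j; rewrite (inj_eq (@perm_inj _ s)).
have P_top : P`_m.-1 = 1.
  have := lead_coef_prod_XsubC (index_enum 'I_m) (fun j => j != i0)
    (fun j => T l * X l.+1 (u j)).
  by rewrite lead_coefE size_prod_XsubC_neq.
under eq_bigr do rewrite factorE.
rewrite (sum_perm_at i0 (fun i => P.[X l i] / \prod_(k | k != i) (X l i - X l k))).
by rewrite lagrange_sum_coef ?size_prod_XsubC_neq // P_top card_ord.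
Qed.

End LevelFactor.

Definition ffun_cons (S : finType) n (s : S) (w : {ffun 'I_n -> S}) : {ffun 'I_n.+1 -> S} :=
  [ffun i => if unlift ord0 i is Some j then w j else s].

Lemma sum_ffun_cons (R : nmodType) (S : finType) n (f : {ffun 'I_n.+1 -> S} -> R) :
  \sum_(w : {ffun 'I_n.+1 -> S}) f w
  = \sum_(s : S) \sum_(w : {ffun 'I_n -> S}) f (ffun_cons s w).
Proof.
rewrite pair_big /= (reindex (fun p : S * {ffun 'I_n -> S} => ffun_cons p.1 p.2)) //=.
exists (fun w : {ffun 'I_n.+1 -> S} => (w ord0, [ffun j => w (lift ord0 j)])).
  move=> [s w] _ /=; rewrite /ffun_cons ffunE unlift_none; congr (_, _).
  by apply/ffunP => j; rewrite !ffunE liftK.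
move=> w _ /=; apply/ffunP => i; rewrite /ffun_cons ffunE.
by case: unliftP => [j ->|->]; rewrite ?ffunE.
Qed.

Section PermAt.
Variable m : nat.

Definition perm_at n (w : {ffun 'I_n -> 'S_m}) (k : nat) : 'S_m :=
  if insub k is Some k' then w k' else 1%g.

Lemma perm_at_cons0 n s (w : {ffun 'I_n -> 'S_m}) : perm_at (ffun_cons s w) 0 = s.
Proof.
rewrite /perm_at; case: insubP => [k _ k0|] //=.
have -> : k = ord0 by apply: val_inj.
by rewrite ffunE unlift_none.
Qed.

Lemma perm_at_consS n s (w : {ffun 'I_n -> 'S_m}) k :
  perm_at (ffun_cons s w) k.+1 = perm_at w k.
Proof.
rewrite /perm_at; case: insubP => [k1 hk1 e1|hk1]; case: insubP => [k2 hk2 e2|hk2] //=.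
- have -> : k1 = lift ord0 k2 by apply: val_inj; rewrite e1 /= /bump /= e2.
  by rewrite ffunE liftK.
- by move: hk1 hk2 => /=; rewrite ltnS => ->.
- by move: hk1 hk2 => /=; rewrite ltnS => /negbTE ->.
Qed.

Lemma sum_prod_level_factor (F : fieldType) (i0 : 'I_m) n
    (X : nat -> 'I_m -> F) (T : nat -> F) :
  (forall l, (l < n)%N -> injective (X l)) ->
  \sum_(w : {ffun 'I_n -> 'S_m})
     \prod_(l < n) level_factor i0 X T l (perm_at w l) (perm_at w l.+1)
  = ((m.-1)`!)%:R ^+ n.
Proof.
elim: n X T => [|n IHn] X T X_inj.
  under eq_bigr do rewrite big_ord0.
  by rewrite sumr_const card_ffun card_ord expr0.
rewrite sum_ffun_cons exprS.
under eq_bigr do under eq_bigr do rewrite big_ord_recl perm_at_cons0 perm_at_consS.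
under eq_bigr do under eq_bigr do under eq_bigr do rewrite lift0 !perm_at_consS.
have sum_first u : \sum_(s : 'S_m) level_factor i0 X T 0 s u = ((m.-1)`!)%:R.
  exact/sum_level_factor/X_inj.
rewrite exchange_big /=.
under eq_bigr do rewrite -big_distrl /= sum_first.
rewrite -big_distrr /= -(IHn (fun l => X l.+1) (fun l => T l.+1)) //.
by move=> l lt_ln; apply: X_inj.
Qed.

End PermAt.

Lemma wvar_perm_at (F : fieldType) a b m (x : nat -> 'I_m -> F)
  (w : {ffun 'I_(b - a) -> 'S_m}) k i :
  (a <= k)%N -> wvar x w k i = x k (perm_at w (k - a) i).
Proof.
by move=> le_ak; rewrite /wvar /perm_at; case: insub => [l|]; rewrite ?le_ak ?perm1.
Qed.

Theorem lemma5p6 (F : fieldType) (a b m : nat) (ha : (1 <= a)%N) (hab : (a < b)%N)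
  (hm : (0 < m)%N) (x : nat -> 'I_m -> F) (t : nat -> F)
  (hx : forall k, (a <= k < b)%N -> forall i j : 'I_m, i != j -> x k i != x k j) :
  \sum_(w : {ffun 'I_(b - a) -> 'S_m}) wterm hm x t w = ((m.-1)`!)%:R ^+ (b - a).
Proof.
have x_inj l : (l < b - a)%N -> injective (x (a + l)%N).
  move=> lt_l i j /eqP; apply: contraTeq => /hx -> //.
  by rewrite leq_addr -ltn_subRL.
rewrite -(@sum_prod_level_factor _ _ (Ordinal hm) _
  (fun l => x (a + l)%N) (fun l => t (a + l)%N) x_inj).
apply: eq_bigr => w _; apply: eq_bigr => l _; apply: eq_bigr => j _.
rewrite !wvar_perm_at ?leq_addr ?addKn //; last by rewrite -addnS leq_addr.
by rewrite -addnS addKn.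
Qed.
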